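(* Let $G$ be a finite connected graph and $r\in\mathbb{N}$. Then the group $\mathcal{D}_r$ of deck transformations of the $r$-local covering $p_r:G_r\to G$ is finitely presented.
   Context: Graphs may have loops and parallel edges and are viewed as 1-complexes; a cycle may be a loop or a pair of parallel edges. A closed walk once around a cycle $O$ is a closed walk in $O$ traversing every edge of $O$ exactly once. For a vertex $x_0$, $\pi_1^r(G,x_0)$ is the subgroup of $\pi_1(G,x_0)$ generated by the classes of all closed walks $W_0QW_0^-$, where $W_0$ is a walk from $x_0$ to a vertex $y$, $Q$ a closed walk at $y$ once around a cycle of length at most $r$, and $W_0^-$ the reverse of $W_0$; it is normal. The $r$-local covering $p_r:G_r\to G$ is the connected normal covering with characteristic subgroup $\pi_1^r(G,x_0)$; its deck group is $\mathcal{D}_r\cong\pi_1(G,x_0)/\pi_1^r(G,x_0)$. *)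

(* Finite multigraphs with loops as 1-complexes,
   walks as sequences of darts, the r-local deck group described as
   pi_1(G,x0)/pi_1^r(G,x0) (combinatorially: closed walks at x0 modulo
   backtracking and insertion/deletion of closed walks once around cycles of
   length <= r), and finite presentability via words modulo a finite set of
   relators. *)
From mathcomp Require Import all_boot.
From Stdlib Require Import Relations.

Set Implicit Arguments.
Unset Strict Implicit.
Unset Printing Implicit Defensive.

Section Graphs.
Variables (V E : finType) (ends : E -> V * V).

Definition dart := (E * bool)%type.
Definition dtail (d : dart) : V := if d.2 then (ends d.1).1 else (ends d.1).2.
Definition dhead (d : dart) : V := if d.2 then (ends d.1).2 else (ends d.1).1.
Definition drev (d : dart) : dart := (d.1, ~~ d.2).

Fixpoint is_walk (x : V) (w : seq dart) (y : V) : bool :=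
  match w with
  | [::] => x == y
  | d :: w' => (dtail d == x) && is_walk (dhead d) w' y
  end.

Definition connected_graph : Prop := forall x y : V, exists w, is_walk x w y.

Definition backtrack (q : seq dart) : Prop := exists d, q = [:: d; drev d].

(* q is a closed walk once around a cycle of length at most r: a nonempty
   closed walk with pairwise distinct vertices (tails) and pairwise distinct
   edges (covers loops, pairs of parallel edges, and longer cycles) *)
Definition once_around_short (r : nat) (q : seq dart) : Prop :=
  exists y, [/\ is_walk y q y, 0 < size q <= r,
                uniq (map dtail q) & uniq (map fst q)].

Definition deck_step (x0 : V) (r : nat) (w w' : seq dart) : Prop :=
  is_walk x0 w x0 /\
  exists w1 q w2, [/\ w = w1 ++ q ++ w2, w' = w1 ++ w2 &
                      backtrack q \/ once_around_short r q].

(* equality in pi_1(G,x0)/pi_1^r(G,x0) *)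
Definition deck_eqv (x0 : V) (r : nat) : relation (seq dart) :=
  clos_refl_sym_trans _ (deck_step x0 r).

End Graphs.

(* words in a free group on S: letters (s, true) = s, (s, false) = s^-1 *)
Definition linv (S : finType) (a : S * bool) : S * bool := (a.1, ~~ a.2).

Definition pres_step (S : finType) (R : seq (seq (S * bool)))
    (u u' : seq (S * bool)) : Prop :=
  exists u1 q u2, [/\ u = u1 ++ q ++ u2, u' = u1 ++ u2 &
                      (exists a, q = [:: a; linv a]) \/ q \in R].

Definition pres_eqv (S : finType) (R : seq (seq (S * bool))) :
  relation (seq (S * bool)) := clos_refl_sym_trans _ (pres_step R).

(* A group given as a setoid (carrier P, equality eqv, multiplication mul)
   is finitely presented: it is isomorphic to < S | R > with S, R finite,
   via a map f on words that is a homomorphism, well defined and injective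
   on classes, and surjective. *)
Definition finitely_presented (T : Type) (P : T -> Prop) (eqv : relation T)
    (mul : T -> T -> T) : Prop :=
  exists (S : finType) (R : seq (seq (S * bool))) (f : seq (S * bool) -> T),
    [/\ forall u, P (f u),
        forall u v, eqv (f (u ++ v)) (mul (f u) (f v)),
        forall u v, pres_eqv R u v <-> eqv (f u) (f v)
      & forall t, P t -> exists u, eqv (f u) t].

From mathcomp Require Import all_boot.
From Stdlib Require Import Relations.

Set Implicit Arguments.
Unset Strict Implicit.
Unset Printing Implicit Defensive.

(* Choose for every vertex v a walk p v from x0 to v, with p x0 empty.  Every
   dart d yields the closed walk p(tail d) d p(head d)^- at x0, and a closed
   walk d1 ... dn at x0 is, up to backtracking, the product of the loops of
   its darts, since the inner segments p(v)^- p(v) cancel.  So the deck group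
   is generated by the darts, subject to the finitely many relations
   d d^- = 1, "the darts of p v multiply to 1", and "every closed walk of
   length <= r once around a cycle is 1"; each of these maps to the trivial
   class, and conversely every deck move is one of these relators. *)

Section Deletion.
Variable T : Type.

Definition del_step (P : seq T -> Prop) : relation (seq T) :=
  fun w w' => exists w1 q w2, [/\ w = w1 ++ q ++ w2, w' = w1 ++ w2 & P q].

Definition cat_compat (R : relation (seq T)) : Prop :=
  forall A B X Y, R X Y -> R (A ++ X ++ B) (A ++ Y ++ B).

Lemma del_step_cat_compat P : cat_compat (del_step P).
Proof.
move=> A B _ _ [w1 [q [w2 [-> -> Pq]]]].
by exists (A ++ w1), q, (w2 ++ B); rewrite !catA.
Qed.

Lemma clos_rt_cat_compat R : cat_compat R -> cat_compat (clos_refl_trans _ R).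
Proof.
move=> HR A B X Y; elim=> [u v Ruv|u|u v w _ IHuv _ IHvw].
- exact/rt_step/HR.
- exact: rt_refl.
- exact: rt_trans IHuv IHvw.
Qed.

Lemma clos_rst_cat_compat R : cat_compat R -> cat_compat (clos_refl_sym_trans _ R).
Proof.
move=> HR A B X Y; elim=> [u v Ruv|u|u v _ IH|u v w _ IHuv _ IHvw].
- exact/rst_step/HR.
- exact: rst_refl.
- exact: rst_sym.
- exact: rst_trans IHuv IHvw.
Qed.

Lemma clos_rst_cat R u u' v v' : cat_compat R ->
  clos_refl_sym_trans _ R u u' -> clos_refl_sym_trans _ R v v' ->
  clos_refl_sym_trans _ R (u ++ v) (u' ++ v').
Proof.
move=> /clos_rst_cat_compat HR Ruu' Rvv'.
apply: (rst_trans _ _ _ (u' ++ v)); first by have := HR [::] v _ _ Ruu'.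
by have := HR u' [::] _ _ Rvv'; rewrite !cats0.
Qed.

End Deletion.

Fixpoint seqs_upto (T : finType) (n : nat) : seq (seq T) :=
  if n is n'.+1 then [::] :: [seq x :: s | x <- enum T, s <- seqs_upto T n']
  else [:: [::]].

Lemma mem_seqs_upto (T : finType) n (s : seq T) : size s <= n -> s \in seqs_upto T n.
Proof.
elim: n s => [|n IHn] [|x s] //=; rewrite ?inE ?eqxx // => size_s.
by apply/orP; right; apply: allpairs_f; [rewrite mem_enum | apply: IHn].
Qed.

Section Walks.
Variables (V E : finType) (ends : E -> V * V).

Local Notation D := (dart E).
Local Notation walk := (is_walk ends).
Local Notation dt := (dtail ends).
Local Notation dh := (dhead ends).

Definition wrev (w : seq D) : seq D := rev (map (@drev E) w).

Lemma drevK : involutive (@drev E).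
Proof. by case=> e b; rewrite /drev /= negbK. Qed.

Lemma wrevK : involutive wrev.
Proof. by move=> w; rewrite /wrev map_rev revK -map_comp (eq_map drevK) map_id. Qed.

Lemma wrev_cat a b : wrev (a ++ b) = wrev b ++ wrev a.
Proof. by rewrite /wrev map_cat rev_cat. Qed.

Lemma wrev_cons d w : wrev (d :: w) = wrev w ++ [:: drev d].
Proof. by rewrite /wrev /= rev_cons cats1. Qed.

Lemma dtail_drev d : dt (drev d) = dh d.
Proof. by case: d => e []. Qed.

Lemma dhead_drev d : dh (drev d) = dt d.
Proof. by case: d => e []. Qed.

Lemma walk_cat x a y b z : walk x a y -> walk y b z -> walk x (a ++ b) z.
Proof.
elim: a x => [|d a IHa] x /=; first by move/eqP->.
by case/andP=> -> /IHa walk_ab /walk_ab.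
Qed.

Lemma walk_cat_inv x a b z : walk x (a ++ b) z -> exists2 y, walk x a y & walk y b z.
Proof.
elim: a x => [|d a IHa] x /=; first by exists x; rewrite ?eqxx.
by case/andP=> -> /IHa [y walk_a walk_b]; exists y.
Qed.

Lemma walk_end_uniq x w y z : walk x w y -> walk x w z -> y = z.
Proof.
elim: w x => [|d w IHw] x /=; first by move=> /eqP <- /eqP.
by case/andP=> _ /IHw walk_y /andP[_ /walk_y].
Qed.

Lemma walk_wrev x w y : walk x w y -> walk y (wrev w) x.
Proof.
elim: w x => [|d w IHw] x /=; first by move/eqP->; rewrite /= eqxx.
case/andP=> /eqP <- /IHw walk_w; rewrite wrev_cons; apply: (walk_cat walk_w).
by rewrite /= dtail_drev dhead_drev !eqxx.
Qed.

Lemma clos_rt_del_walk (P : seq D -> Prop) w w' x z :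
  (forall q a b, P q -> walk a q b -> a = b) ->
  clos_refl_trans _ (del_step P) w w' -> walk x w z -> walk x w' z.
Proof.
move=> P_closed; elim=> {w w'} [_ _ [w1 [q [w2 [-> -> Pq]]]]|//|u v w _ IHuv _ IHvw].
  case/walk_cat_inv=> y walk_w1 /walk_cat_inv [y' walk_q walk_w2].
  by apply: (walk_cat walk_w1); rewrite (P_closed _ _ _ Pq walk_q).
by move/IHuv/IHvw.
Qed.

Section Deck.
Variable r : nat.

Definition deck_move (q : seq D) : Prop := backtrack q \/ once_around_short ends r q.

Local Notation red := (clos_refl_trans _ (del_step deck_move)).

Lemma deck_move_closed q a b : deck_move q -> walk a q b -> a = b.
Proof.
case=> [[d ->]|[y [walk_y size_q _ _]]].
  by rewrite /= dtail_drev dhead_drev => /and3P[/eqP <- _ /eqP <-].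
case: q walk_y size_q => [//|d q] walk_y _ walk_ab.
have a_y : a = y by move: walk_y walk_ab => /= /andP[/eqP <- _] /andP[/eqP <- _].
by rewrite a_y in walk_ab *; apply: walk_end_uniq walk_y walk_ab.
Qed.

Lemma red_deck_eqv x0 w w' : red w w' -> walk x0 w x0 -> deck_eqv ends x0 r w w'.
Proof.
elim=> [u v step_uv|u|u v w'' red_uv IHuv _ IHvw] walk_u.
- exact: rst_step.
- exact: rst_refl.
- apply: rst_trans (IHuv walk_u) (IHvw _).
  exact: clos_rt_del_walk deck_move_closed red_uv walk_u.
Qed.

Lemma red_ctx A B X Y : red X Y -> red (A ++ X ++ B) (A ++ Y ++ B).
Proof. exact: (clos_rt_cat_compat (@del_step_cat_compat _ deck_move)). Qed.

Lemma red_backtrack d : red [:: d; drev d] [::].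
Proof.
by apply: rt_step; exists [::], [:: d; drev d], [::]; split=> //; left; exists d.
Qed.

Lemma red_wrev_r X : red (X ++ wrev X) [::].
Proof.
elim: X => [|d X IHX]; first exact: rt_refl.
rewrite wrev_cons -cat1s -catA (catA X).
apply: (rt_trans _ _ _ ([:: d] ++ [:: drev d])); last exact: red_backtrack.
exact: (red_ctx [:: d] [:: drev d] IHX).
Qed.

Lemma red_wrev_l X : red (wrev X ++ X) [::].
Proof. by have := red_wrev_r (wrev X); rewrite wrevK. Qed.

Section Presentation.
Variables (x0 : V) (p : V -> seq D).
Hypothesis p_x0 : p x0 = [::].
Hypothesis walk_p : forall v, walk x0 (p v) v.

Definition dart_loop (d : D) : seq D := p (dt d) ++ d :: wrev (p (dh d)).

Definition letter_loop (a : D * bool) : seq D :=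
  dart_loop (if a.2 then a.1 else drev a.1).

Definition eval_word (u : seq (D * bool)) : seq D := flatten (map letter_loop u).

Definition letters (w : seq D) : seq (D * bool) := map (fun d => (d, true)) w.

Lemma dart_loop_drev d : dart_loop (drev d) = wrev (dart_loop d).
Proof. by rewrite /dart_loop wrev_cat wrev_cons wrevK dtail_drev dhead_drev -catA. Qed.

Lemma walk_dart_loop d : walk x0 (dart_loop d) x0.
Proof. by apply: (walk_cat (walk_p _)); rewrite /= eqxx walk_wrev. Qed.

Lemma walk_eval_word u : walk x0 (eval_word u) x0.
Proof.
by elim: u => [|a u IHu] /=; [rewrite eqxx | apply: walk_cat (walk_dart_loop _) IHu].
Qed.

Lemma eval_word_cat u v : eval_word (u ++ v) = eval_word u ++ eval_word v.
Proof. by rewrite /eval_word map_cat flatten_cat. Qed.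

Lemma eval_word_cons a u : eval_word (a :: u) = letter_loop a ++ eval_word u.
Proof. by []. Qed.

(* Telescoping: p(v)^- p(v) cancels at each intermediate vertex v. *)
Lemma red_eval_letters_wrev x w y : walk x w y ->
  red (wrev (p x) ++ eval_word (letters w)) (w ++ wrev (p y)).
Proof.
elim: w x => [|d w IHw] x /=; first by move/eqP->; rewrite cats0; apply: rt_refl.
case/andP=> /eqP <- /IHw red_w.
rewrite eval_word_cons /letter_loop /dart_loop /= -catA catA.
apply: (rt_trans _ _ _ (d :: wrev (p (dh d)) ++ eval_word (letters w))).
  exact: (red_ctx [::] _ (red_wrev_l _)).
by have := red_ctx [:: d] [::] red_w; rewrite !cats0.
Qed.

Lemma red_eval_letters_closed w : walk x0 w x0 -> red (eval_word (letters w)) w.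
Proof. by move/red_eval_letters_wrev; rewrite p_x0 cats0. Qed.

Lemma red_eval_letters_nil x w y : walk x w y ->
  red (p x ++ w ++ wrev (p y)) [::] -> red (eval_word (letters w)) [::].
Proof.
case: w => [|d w] walk_w red_w; first exact: rt_refl.
apply: (rt_trans _ _ _ _ _ _ red_w).
move: walk_w => /= /andP[/eqP <- /red_eval_letters_wrev red_rest].
have red_d := red_ctx [:: d] [::] red_rest; rewrite !cats0 in red_d.
have := red_ctx (p (dt d)) [::] red_d; rewrite !cats0.
by rewrite eval_word_cons /letter_loop /dart_loop /= -catA.
Qed.

Definition once_around_shortb (q : seq D) : bool :=
  [exists y, [&& walk y q y, 0 < size q <= r, uniq (map dt q) & uniq (map fst q)]].

Lemma once_around_shortP q : reflect (once_around_short ends r q) (once_around_shortb q).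
Proof.
apply: (iffP existsP) => [[y /and4P[]]|[y []]] walk_y size_q uniq_dt uniq_fst.
  by exists y; split.
by exists y; apply/and4P; split.
Qed.

Definition relator_walks : seq (seq D) :=
  [seq [:: d; drev d] | d <- enum {: E * bool}] ++ [seq p v | v <- enum V]
  ++ filter once_around_shortb (seqs_upto (E * bool)%type r).

Definition relators : seq (seq (D * bool)) := map letters relator_walks.

Lemma red_relator_walk q : q \in relator_walks -> red (eval_word (letters q)) [::].
Proof.
have red_closed y q' : red q' [::] -> walk y q' y -> red (eval_word (letters q')) [::].
  move=> red_q' walk_q'; apply: (red_eval_letters_nil walk_q').
  apply: (rt_trans _ _ _ (p y ++ wrev (p y))); last exact: red_wrev_r.
  exact: (red_ctx (p y) (wrev (p y)) red_q').
rewrite !mem_cat => /or3P[/mapP[d _ ->]|/mapP[v _ ->]|].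
- apply: (red_closed (dt d)); first exact: red_backtrack.
  by rewrite /= dtail_drev dhead_drev !eqxx.
- apply: (red_eval_letters_nil (walk_p v)).
  by rewrite p_x0; apply: red_wrev_r.
- rewrite mem_filter => /andP[/once_around_shortP short_q _].
  have [y [walk_y _ _ _]] := short_q.
  apply: (red_closed y) walk_y; apply: rt_step.
  by exists [::], q, [::]; rewrite cats0; split=> //; right.
Qed.

Lemma red_letter_loop_linv a : red (letter_loop a ++ letter_loop (linv a)) [::].
Proof.
case: a => d [] /=; rewrite /letter_loop /= dart_loop_drev.
  exact: red_wrev_r.
exact: red_wrev_l.
Qed.

Lemma eval_word_deck_eqv u v :
  pres_eqv relators u v -> deck_eqv ends x0 r (eval_word u) (eval_word v).
Proof.
elim=> [_ _ [u1 [q [u2 [-> -> del_q]]]]|u'|u' v' _ IH|u' v' w' _ IHuv _ IHvw].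
- have red_q : red (eval_word q) [::].
    case: del_q => [[a ->]|/mapP[q' q'_rel ->]]; last exact: red_relator_walk.
    by rewrite /eval_word /= cats0; apply: red_letter_loop_linv.
  apply: red_deck_eqv; last exact: walk_eval_word.
  by rewrite !eval_word_cat; exact: (red_ctx (eval_word u1) (eval_word u2) red_q).
- exact: rst_refl.
- exact: rst_sym.
- exact: rst_trans IHuv IHvw.
Qed.

Local Notation pres := (pres_eqv relators).

Lemma pres_ctx A B u v : pres u v -> pres (A ++ u ++ B) (A ++ v ++ B).
Proof. exact: (clos_rst_cat_compat (@del_step_cat_compat _ _)). Qed.

Lemma pres_cat u u' v v' : pres u u' -> pres v v' -> pres (u ++ v) (u' ++ v').
Proof. exact: (clos_rst_cat (@del_step_cat_compat _ _)). Qed.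

Lemma pres_relator A B q : q \in relators -> pres (A ++ q ++ B) (A ++ B).
Proof. by move=> q_rel; apply: rst_step; exists A, q, B; split=> //; right. Qed.

Lemma pres_letters_relator q : q \in relator_walks -> pres (letters q) [::].
Proof. by move/(map_f letters)/(pres_relator [::] [::]); rewrite cats0. Qed.

Lemma backtrack_relator_walk d : [:: d; drev d] \in relator_walks.
Proof. by rewrite !mem_cat map_f ?mem_enum. Qed.

Lemma path_relator_walk v : p v \in relator_walks.
Proof. by rewrite !mem_cat [p v \in [seq p _ | _ <- _]]map_f ?mem_enum ?orbT. Qed.

Lemma short_relator_walk q : once_around_short ends r q -> q \in relator_walks.
Proof.
move=> short_q; rewrite !mem_cat mem_filter (introT (once_around_shortP q) short_q).
by rewrite mem_seqs_upto ?orbT //; case: short_q => y [_ /andP[]].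
Qed.

Lemma pres_letters_wrev_r X : pres (letters (X ++ wrev X)) [::].
Proof.
elim: X => [|d X IHX]; first exact: rst_refl.
have -> : letters ((d :: X) ++ wrev (d :: X))
    = [:: (d, true)] ++ letters (X ++ wrev X) ++ [:: (drev d, true)].
  by rewrite wrev_cons /letters /= !map_cat catA.
apply: (rst_trans _ _ _ (letters [:: d; drev d])).
  exact: (pres_ctx [:: (d, true)] [:: (drev d, true)] IHX).
exact/pres_letters_relator/backtrack_relator_walk.
Qed.

Lemma pres_letters_path v : pres (letters (p v)) [::].
Proof. exact/pres_letters_relator/path_relator_walk. Qed.

Lemma pres_letters_wrev_path v : pres (letters (wrev (p v))) [::].
Proof.
apply: (rst_trans _ _ _ (letters (p v ++ wrev (p v)))); last exact: pres_letters_wrev_r.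
rewrite /letters map_cat -/(letters _).
by apply: rst_sym; exact: (pres_ctx [::] _ (pres_letters_path v)).
Qed.

Lemma pres_letters_dart_loop d : pres (letters (dart_loop d)) [:: (d, true)].
Proof.
rewrite /dart_loop /letters map_cat /= -/(letters _) -cat1s.
apply: (pres_cat (pres_letters_path _)).
by have := pres_ctx [:: (d, true)] [::] (pres_letters_wrev_path (dh d)); rewrite !cats0.
Qed.

Lemma pres_inv_letter d : pres [:: (d, false)] [:: (drev d, true)].
Proof.
apply: (rst_trans _ _ _ ([:: (d, false)] ++ letters [:: d; drev d])).
  apply: rst_sym.
  exact: (pres_relator [:: (d, false)] [::] (map_f letters (backtrack_relator_walk d))).
apply: rst_step; exists [::], [:: (d, false); (d, true)], [:: (drev d, true)].
by split=> //; left; exists (d, false).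
Qed.

Lemma pres_letters_letter_loop a : pres (letters (letter_loop a)) [:: a].
Proof.
case: a => d [] /=; first exact: pres_letters_dart_loop.
apply: rst_trans (pres_letters_dart_loop _) (rst_sym _ _ _ _ (pres_inv_letter d)).
Qed.

Lemma pres_letters_eval_word u : pres (letters (eval_word u)) u.
Proof.
elim: u => [|a u IHu]; first exact: rst_refl.
rewrite eval_word_cons /letters map_cat -/(letters _) -cat1s.
exact: pres_cat (pres_letters_letter_loop a) IHu.
Qed.

Lemma deck_eqv_pres_letters w w' :
  deck_eqv ends x0 r w w' -> pres (letters w) (letters w').
Proof.
elim=> [_ _ [_ [w1 [q [w2 [-> -> move_q]]]]]|u|u v _ IH|u v w'' _ IHuv _ IHvw].
- rewrite /letters !map_cat -!/(letters _); apply: pres_relator; apply: map_f.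
  by case: move_q => [[d ->]|/short_relator_walk]; first exact: backtrack_relator_walk.
- exact: rst_refl.
- exact: rst_sym.
- exact: rst_trans IHuv IHvw.
Qed.

Lemma deck_group_finitely_presented :
  finitely_presented (fun w => walk x0 w x0) (deck_eqv ends x0 r) cat.
Proof.
exists (E * bool : finType)%type, relators, eval_word; split.
- exact: walk_eval_word.
- by move=> u v; rewrite eval_word_cat; apply: rst_refl.
- move=> u v; split; first exact: eval_word_deck_eqv.
  move/deck_eqv_pres_letters => pres_uv.
  apply: rst_trans (rst_sym _ _ _ _ (pres_letters_eval_word u)) _.
  exact: rst_trans pres_uv (pres_letters_eval_word v).
- move=> w walk_w; exists (letters w).
  exact/red_deck_eqv/walk_eval_word/red_eval_letters_closed.
Qed.

End Presentation.
End Deck.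
End Walks.

Theorem proposition4p8 (V E : finType) (ends : E -> V * V) (r : nat) (x0 : V) :
  connected_graph ends ->
  finitely_presented (fun w : seq (dart E) => is_walk ends x0 w x0)
                     (deck_eqv ends x0 r) cat.
Proof.
move=> connected.
pose p v := if v == x0 then [::] else xchoose (connected x0 v).
apply: (@deck_group_finitely_presented V E ends r x0 p); first by rewrite /p eqxx.
move=> v; rewrite /p; case: eqP => [->|_]; first by rewrite /= eqxx.
exact: (xchooseP (connected x0 v)).
Qed.
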